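(* For every integer $r\ge 1$, $$\sum_{n=1}^{\infty}\frac{n4^n}{(2n-1)^2(4n+2r-1)}\frac{\binom{2n}{n}}{\binom{4n+2r-2}{2n+r-1}}=\sqrt{2}\sum_{k=0}^{r}\frac{(-1)^k}{(2k+1)2^{2r-k-1}}\binom{r}{k}\mathcal{B}(k),$$ where $\mathcal{B}(k)=\int_0^{1/2}\frac{t^k}{\sqrt{1-t}}\,\mathrm{d}t$. *)

From Stdlib Require Import Reals.
From Coquelicot Require Import Coquelicot.
Open Scope R_scope.

(* B(k) = \int_0^{1/2} t^k / sqrt(1-t) dt  (proper Riemann integral; the
   integrand is continuous on [0,1/2]). *)
Definition calB (k : nat) : R :=
  RInt (fun t => t ^ k / sqrt (1 - t)) 0 (1 / 2).

Definition lhs_term (r n : nat) : R :=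
  INR n * 4 ^ n / ((2 * INR n - 1) ^ 2 * (4 * INR n + 2 * INR r - 1))
  * (Binomial.C (2 * n) n / Binomial.C (4 * n + 2 * r - 2) (2 * n + r - 1)).

(* The right-hand side. For 0 <= k <= r and r >= 1, 2r-k-1 >= 0, so the
   natural-number subtraction in the exponent is exact. *)
Definition rhs_value (r : nat) : R :=
  sqrt 2 * sum_f_R0 (fun k =>
    (-1) ^ k / ((2 * INR k + 1) * 2 ^ (2 * r - k - 1)) * Binomial.C r k * calB k) r.

From Stdlib Require Import Reals Lra Lia.
From Coquelicot Require Import Coquelicot.
Open Scope R_scope.

(* Let b_m = C(2m,m)/4^m, the Taylor coefficients of 1/sqrt(1-y), and
   phi_r(w) = int_0^w (1-t^2)^r dt, expanded binomially.  Integrating by parts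
   against Wallis' integrals int_0^1 (1-w^2)^K dw = 1/((2K+1) b_K) shows that
   the m-th term of the series (shifted by one) is
   4^(1-r) b_m int_0^1 phi_r(w) w (1-w^2)^(2m) dw.  Summing under the integral
   with y = (1-w^2)^2, so that 1 - y = w^2 (2-w^2), the series becomes
   4^(1-r) int_0^1 phi_r(w) / sqrt(2-w^2) dw, and the substitution t = w^2/2
   turns this into the right-hand side.  The interchange is justified by the
   remainder estimate 0 <= 1 - sqrt(1-y) sum_(m<=N) b_m y^m
   <= b_(N+1) y^(N+1) / sqrt(1-y) together with b_N -> 0. *)

Lemma is_derive_value (f : R -> R) x l l' : is_derive f x l -> l = l' -> is_derive f x l'.
Proof. now intros H <-. Qed.

Lemma is_RInt_value (f : R -> R) a c l l' : is_RInt f a c l -> l = l' -> is_RInt f a c l'.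
Proof. now intros H <-. Qed.

Lemma is_RInt_scal_l (f : R -> R) a c l u :
  is_RInt f a c l -> is_RInt (fun x => u * f x) a c (u * l).
Proof. apply (is_RInt_scal (V := R_NormedModule)). Qed.

Lemma is_RInt_const_R a c v : is_RInt (fun _ => v) a c ((c - a) * v).
Proof. apply (is_RInt_const (V := R_NormedModule)). Qed.

Lemma is_RInt_sum_f_R0 (f : nat -> R -> R) (v : nat -> R) a c n :
  (forall k, (k <= n)%nat -> is_RInt (f k) a c (v k)) ->
  is_RInt (fun y => sum_f_R0 (fun k => f k y) n) a c (sum_f_R0 v n).
Proof.
  induction n as [|n IH]; intro H; simpl; [apply H; lia|].
  apply (is_RInt_plus (V := R_NormedModule)); [apply IH; intros|]; apply H; lia.
Qed.

Lemma is_RInt_RInt_of_ex_derive (f : R -> R) a c :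
  (forall x, Rmin a c <= x <= Rmax a c -> ex_derive f x) -> is_RInt f a c (RInt f a c).
Proof.
  intro H. apply (RInt_correct (V := R_CompleteNormedModule)).
  apply (ex_RInt_continuous (V := R_CompleteNormedModule)).
  intros x Hx. apply (ex_derive_continuous (K := R_AbsRing) (V := R_NormedModule)), H, Hx.
Qed.

Lemma is_RInt_derive_zero (h dh : R -> R) a c :
  (forall x, Rmin a c <= x <= Rmax a c -> is_derive h x (dh x)) ->
  (forall x, Rmin a c <= x <= Rmax a c -> ex_derive dh x) ->
  h a = h c -> is_RInt dh a c 0.
Proof.
  intros Hd Hc Eh. eapply is_RInt_value.
  - apply (is_RInt_derive (V := R_CompleteNormedModule)); [exact Hd|].
    intros x Hx. apply (ex_derive_continuous (K := R_AbsRing) (V := R_NormedModule)), Hc, Hx.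
  - rewrite Eh. apply (minus_eq_zero (G := R_AbelianGroup)).
Qed.

Lemma le_of_is_derive_nonneg (f df : R -> R) a c :
  a <= c -> (forall x, a <= x <= c -> is_derive f x (df x)) ->
  (forall x, a <= x <= c -> 0 <= df x) -> f a <= f c.
Proof.
  intros Hac Hd Hp.
  destruct (MVT_gen f a c df) as [x [Hx E]]; rewrite ?Rmin_left, ?Rmax_right in * by lra.
  - intros x Hx. apply Hd; lra.
  - intros x Hx. apply continuity_pt_filterlim.
    apply (ex_derive_continuous (K := R_AbsRing) (V := R_NormedModule)).
    exists (df x). apply Hd; lra.
  - specialize (Hp x ltac:(lra)). nra.
Qed.

Fixpoint central_binom_ratio (n : nat) : R :=
  match n with
  | O => 1
  | S n => central_binom_ratio n * (2 * INR n + 1) / (2 * INR n + 2)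
  end.

Lemma central_binom_ratio_S n :
  central_binom_ratio (S n) = central_binom_ratio n * (2 * INR n + 1) / (2 * INR n + 2).
Proof. reflexivity. Qed.

Lemma central_binom_ratio_pos n : 0 < central_binom_ratio n.
Proof.
  induction n as [|n IH]; simpl; [lra|].
  pose proof (pos_INR n).
  apply Rdiv_lt_0_compat; [apply Rmult_lt_0_compat|]; lra.
Qed.

Lemma C_central_binom n : Binomial.C (2 * n) n = 4 ^ n * central_binom_ratio n.
Proof.
  induction n as [|n IH]; [unfold Binomial.C; simpl; field|].
  rewrite central_binom_ratio_S.
  unfold Binomial.C in *.
  replace (2 * n - n)%nat with n in IH by lia.
  replace (2 * S n - S n)%nat with (S n) by lia.
  replace (2 * S n)%nat with (S (S (2 * n))) by lia.
  assert (Eb : central_binom_ratio n =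
     INR (Factorial.fact (2 * n)) / (INR (Factorial.fact n) * INR (Factorial.fact n)) / 4 ^ n).
  { rewrite IH. field. apply pow_nonzero; lra. }
  rewrite Eb, !fact_simpl, !mult_INR, !S_INR, mult_INR.
  pose proof (INR_fact_neq_0 n). pose proof (INR_fact_neq_0 (2 * n)). pose proof (pos_INR n).
  simpl. field. repeat split; try lra. apply pow_nonzero; lra.
Qed.

Lemma central_binom_ratio_sqr_le n :
  central_binom_ratio n * central_binom_ratio n <= / (INR n + 1).
Proof.
  induction n as [|n IH]; [simpl; lra|].
  rewrite central_binom_ratio_S, S_INR.
  pose proof (pos_INR n). set (x := INR n) in *. set (c := central_binom_ratio n) in *.
  apply Rle_trans with (/ (x + 1) * ((2 * x + 1) ^ 2 / (2 * x + 2) ^ 2)).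
  - replace (c * (2 * x + 1) / (2 * x + 2) * (c * (2 * x + 1) / (2 * x + 2)))
      with (c * c * ((2 * x + 1) ^ 2 / (2 * x + 2) ^ 2)) by (field; lra).
    apply Rmult_le_compat_r; [|exact IH].
    apply Rdiv_le_0_compat; nra.
  - assert (E : / (x + 1 + 1) - / (x + 1) * ((2 * x + 1) ^ 2 / (2 * x + 2) ^ 2)
                = (3 * x + 2) / (4 * (x + 1) ^ 3 * (x + 2))) by (field; lra).
    assert (0 <= (3 * x + 2) / (4 * (x + 1) ^ 3 * (x + 2))).
    { apply Rdiv_le_0_compat; nra. }
    lra.
Qed.

Lemma is_lim_seq_central_binom_ratio : is_lim_seq central_binom_ratio 0.
Proof.
  assert (Hsq : is_lim_seq (fun n => central_binom_ratio n * central_binom_ratio n) 0).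
  { apply is_lim_seq_le_le with (fun _ => 0) (fun n => / (INR n + 1)).
    - intro n. pose proof (central_binom_ratio_pos n).
      split; [nra | apply central_binom_ratio_sqr_le].
    - apply is_lim_seq_const.
    - replace (Finite 0) with (Rbar_inv p_infty) by reflexivity.
      apply is_lim_seq_inv; [|discriminate].
      apply is_lim_seq_ext with (fun n => INR (S n)); [intro; apply S_INR|].
      apply -> is_lim_seq_incr_1. apply is_lim_seq_INR. }
  apply is_lim_seq_ext with (fun n => sqrt (central_binom_ratio n * central_binom_ratio n)).
  { intro n. apply sqrt_square. apply Rlt_le, central_binom_ratio_pos. }
  rewrite <- sqrt_0. apply is_lim_seq_continuous; [apply continuity_pt_sqrt; lra | exact Hsq].
Qed.

Definition phi (r : nat) (w : R) : R :=
  sum_f_R0 (fun k => Binomial.C r k * (-1) ^ k * w ^ (2 * k + 1) / (2 * INR k + 1)) r.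

Lemma is_derive_phi r w : is_derive (phi r) w ((1 - w ^ 2) ^ r).
Proof.
  apply is_derive_ext with
    (fun y => sum_n (fun k => Binomial.C r k * (-1) ^ k * y ^ (2 * k + 1) / (2 * INR k + 1)) r).
  { intro y. apply sum_n_Reals. }
  eapply is_derive_value.
  { apply (is_derive_sum_n (K := R_AbsRing) (V := R_NormedModule)
             _ r w (fun k => Binomial.C r k * (-1) ^ k * w ^ (2 * k))).
    intros k _. auto_derive; [easy|].
    replace (Init.Nat.pred (k + (k + 0) + 1)) with (2 * k)%nat by lia.
    replace (k + (k + 0) + 1)%nat with (S (2 * k)) by lia.
    rewrite S_INR, mult_INR. pose proof (pos_INR k). simpl. field. lra. }
  rewrite sum_n_Reals.
  replace (1 - w ^ 2) with (- w ^ 2 + 1) by ring. rewrite binomial.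
  apply sum_eq. intros k _.
  rewrite pow1, pow_mult. replace (- w ^ 2) with (-1 * w ^ 2) by ring.
  rewrite Rpow_mult_distr. ring.
Qed.

Lemma phi_0 r : phi r 0 = 0.
Proof.
  apply sum_eq_R0. intros k _. rewrite pow_i by lia. unfold Rdiv. ring.
Qed.

Lemma phi_bounds r w : 0 <= w <= 1 -> 0 <= phi r w <= w.
Proof.
  intros Hw. split.
  - rewrite <- (phi_0 r).
    apply (le_of_is_derive_nonneg _ (fun x => (1 - x ^ 2) ^ r)); [lra| |].
    + intros; apply is_derive_phi.
    + intros x Hx. apply pow_le. nra.
  - enough (H : 0 - phi r 0 <= w - phi r w) by (rewrite phi_0 in H; lra).
    apply (le_of_is_derive_nonneg (fun x => x - phi r x) (fun x => 1 - (1 - x ^ 2) ^ r)); [lra| |].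
    + intros. apply (is_derive_minus (fun x : R => x) (phi r)).
      * apply (is_derive_id (K := R_AbsRing)).
      * apply is_derive_phi.
    + intros x Hx. assert (H : (1 - x ^ 2) ^ r <= 1 ^ r) by (apply pow_incr; nra).
      rewrite pow1 in H. lra.
Qed.

Definition inv_sqrt_partial (N : nat) (y : R) : R :=
  sum_f_R0 (fun m => central_binom_ratio m * y ^ m) N.

Lemma inv_sqrt_partial_0 N : inv_sqrt_partial N 0 = 1.
Proof.
  induction N as [|N IH]; unfold inv_sqrt_partial in *; simpl; [ring|].
  rewrite IH. ring.
Qed.

Lemma is_derive_sqrt_mul_inv_sqrt_partial N y : y < 1 ->
  is_derive (fun t => sqrt (1 - t) * inv_sqrt_partial N t) y
    (- (INR N + 1) * central_binom_ratio (S N) * y ^ N / sqrt (1 - y)).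
Proof.
  intro Hy.
  assert (Hs : 0 < sqrt (1 - y)) by (apply sqrt_lt_R0; lra).
  assert (Hss : sqrt (1 - y) * sqrt (1 - y) = 1 - y) by (apply sqrt_sqrt; lra).
  induction N as [|N IH].
  - unfold inv_sqrt_partial. simpl. auto_derive; [lra|].
    replace (1 + - y) with (1 - y) by ring. field. lra.
  - set (c := central_binom_ratio (S N)).
    apply is_derive_ext with
      (fun t => sqrt (1 - t) * inv_sqrt_partial N t + c * (sqrt (1 - t) * t ^ S N)).
    { intro t. unfold inv_sqrt_partial, c. simpl. ring. }
    assert (Hg : is_derive (fun t => c * (sqrt (1 - t) * t ^ S N)) y
      (c * (- / (2 * sqrt (1 - y)) * y ^ S N + sqrt (1 - y) * (INR (S N) * y ^ N)))).
    { auto_derive; [lra|]. replace (1 + - y) with (1 - y) by ring. simpl. ring. }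
    eapply is_derive_value; [apply (is_derive_plus _ _ _ _ _ IH Hg)|].
    unfold c. rewrite (central_binom_ratio_S (S N)), !S_INR.
    unfold plus. simpl.
    set (s := sqrt (1 - y)) in *. replace y with (1 - s * s) by lra.
    pose proof (pos_INR N). field. lra.
Qed.

Lemma sqrt_mul_inv_sqrt_partial_le_1 N y : 0 <= y < 1 ->
  sqrt (1 - y) * inv_sqrt_partial N y <= 1.
Proof.
  intros Hy.
  enough (H : - (sqrt (1 - 0) * inv_sqrt_partial N 0) <= - (sqrt (1 - y) * inv_sqrt_partial N y))
    by (rewrite inv_sqrt_partial_0, Rminus_0_r, sqrt_1 in H; lra).
  apply (le_of_is_derive_nonneg (fun t => - (sqrt (1 - t) * inv_sqrt_partial N t))
          (fun t => (INR N + 1) * central_binom_ratio (S N) * t ^ N / sqrt (1 - t))); [lra| |].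
  - intros x Hx. eapply is_derive_value.
    + apply (is_derive_opp (fun t => sqrt (1 - t) * inv_sqrt_partial N t)).
      apply is_derive_sqrt_mul_inv_sqrt_partial. lra.
    + unfold opp; simpl. unfold Rdiv. ring.
  - intros x Hx. pose proof (pos_INR N). pose proof (central_binom_ratio_pos (S N)).
    assert (0 < sqrt (1 - x)) by (apply sqrt_lt_R0; lra).
    apply Rdiv_le_0_compat; [|lra].
    apply Rmult_le_pos; [nra | apply pow_le; lra].
Qed.

Lemma one_sub_sqrt_mul_inv_sqrt_partial_le N y : 0 <= y < 1 ->
  1 - sqrt (1 - y) * inv_sqrt_partial N y
    <= central_binom_ratio (S N) * y ^ S N / sqrt (1 - y).
Proof.
  intros Hy. set (c := central_binom_ratio (S N)).
  set (G := fun t => c * t ^ S N / sqrt (1 - t) + sqrt (1 - t) * inv_sqrt_partial N t).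
  enough (H : G 0 <= G y).
  { unfold G in H. rewrite inv_sqrt_partial_0, Rminus_0_r, sqrt_1, pow_i in H by lia. lra. }
  apply (le_of_is_derive_nonneg G (fun t => c * t ^ S N / (2 * (1 - t) * sqrt (1 - t)))); [lra| |].
  - intros x Hx.
    assert (Hs : 0 < sqrt (1 - x)) by (apply sqrt_lt_R0; lra).
    assert (Hss : sqrt (1 - x) * sqrt (1 - x) = 1 - x) by (apply sqrt_sqrt; lra).
    assert (Hg : is_derive (fun t => c * t ^ S N / sqrt (1 - t)) x
       (c * (INR (S N) * x ^ N / sqrt (1 - x) + x ^ S N / (2 * (1 - x) * sqrt (1 - x))))).
    { auto_derive; replace (1 + - x) with (1 - x) by ring; [repeat split; lra|].
      change (match N with 0%nat => 1 | S _ => INR N + 1 end) with (INR (S N)).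
      set (s := sqrt (1 - x)) in *. rewrite <- Hss. simpl pow. field. lra. }
    eapply is_derive_value.
    + exact (is_derive_plus _ _ _ _ _ Hg (is_derive_sqrt_mul_inv_sqrt_partial N x ltac:(lra))).
    + rewrite S_INR. fold c. unfold plus. simpl. field. split; apply Rgt_not_eq; lra.
  - intros x Hx. assert (0 < sqrt (1 - x)) by (apply sqrt_lt_R0; lra).
    apply Rdiv_le_0_compat; [|nra].
    apply Rmult_le_pos; [apply Rlt_le, central_binom_ratio_pos | apply pow_le; lra].
Qed.

Definition wallis (K : nat) : R := RInt (fun w => (1 - w ^ 2) ^ K) 0 1.

Lemma is_RInt_wallis K : is_RInt (fun w => (1 - w ^ 2) ^ K) 0 1 (wallis K).
Proof. apply is_RInt_RInt_of_ex_derive. intros; auto_derive; easy. Qed.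

Lemma wallis_S K : (2 * INR K + 3) * wallis (S K) = (2 * INR K + 2) * wallis K.
Proof.
  set (dh := fun w => (2 * INR K + 3) * (1 - w ^ 2) ^ S K - (2 * INR K + 2) * (1 - w ^ 2) ^ K).
  assert (H0 : is_RInt dh 0 1 0).
  { apply (is_RInt_derive_zero (fun w => w * (1 - w ^ 2) ^ S K)).
    - intros x _. unfold dh. auto_derive; [easy|].
      change (match K with 0%nat => 1 | S _ => INR K + 1 end) with (INR (S K)).
      rewrite S_INR. replace (1 + - (x * (x * 1))) with (1 - x ^ 2) by ring. simpl. ring.
    - intros x _. unfold dh. auto_derive. easy.
    - simpl. ring. }
  assert (H : is_RInt dh 0 1 ((2 * INR K + 3) * wallis (S K) - (2 * INR K + 2) * wallis K)).
  { apply (is_RInt_minus (V := R_NormedModule)); apply is_RInt_scal_l, is_RInt_wallis. }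
  apply (is_RInt_unique (V := R_CompleteNormedModule)) in H0, H.
  lra.
Qed.

Lemma wallis_eq K : wallis K = / ((2 * INR K + 1) * central_binom_ratio K).
Proof.
  induction K as [|K IH].
  - unfold wallis. rewrite (RInt_ext _ (fun _ => 1)) by (intros; simpl; ring).
    rewrite RInt_const. compute. field.
  - pose proof (wallis_S K). pose proof (pos_INR K). pose proof (central_binom_ratio_pos K).
    rewrite central_binom_ratio_S, S_INR.
    apply Rmult_eq_reg_l with (2 * INR K + 3); [|lra].
    rewrite H, IH. field. lra.
Qed.

Definition phi_moment (r m : nat) : R :=
  RInt (fun w => phi r w * (w * (1 - w ^ 2) ^ (2 * m))) 0 1.

Lemma ex_derive_phi_moment_integrand r m x :
  ex_derive (fun w => phi r w * (w * (1 - w ^ 2) ^ (2 * m))) x.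
Proof.
  apply (ex_derive_mult (phi r)); [exists ((1 - x ^ 2) ^ r); apply is_derive_phi|].
  auto_derive. easy.
Qed.

Lemma is_RInt_phi_moment r m :
  is_RInt (fun w => phi r w * (w * (1 - w ^ 2) ^ (2 * m))) 0 1 (phi_moment r m).
Proof. apply is_RInt_RInt_of_ex_derive. intros; apply ex_derive_phi_moment_integrand. Qed.

Lemma phi_moment_eq r m : 2 * (2 * INR m + 1) * phi_moment r m = wallis (r + 2 * m + 1).
Proof.
  set (dh := fun w => (1 - w ^ 2) ^ (r + 2 * m + 1)
                      - 2 * (2 * INR m + 1) * (phi r w * (w * (1 - w ^ 2) ^ (2 * m)))).
  assert (H0 : is_RInt dh 0 1 0).
  { apply (is_RInt_derive_zero (fun w => phi r w * (1 - w ^ 2) ^ S (2 * m))).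
    - intros x _.
      assert (Hg : is_derive (fun w => (1 - w ^ 2) ^ S (2 * m)) x
                     (- 2 * x * (2 * INR m + 1) * (1 - x ^ 2) ^ (2 * m))).
      { auto_derive; [easy|].
        change (match (m + (m + 0))%nat with 0%nat => 1 | S _ => INR (m + (m + 0)) + 1 end)
          with (INR (S (m + (m + 0)))).
        replace (1 + - (x * (x * 1))) with (1 - x ^ 2) by ring.
        replace (m + (m + 0))%nat with (2 * m)%nat by lia.
        rewrite S_INR, mult_INR. simpl. ring. }
      eapply is_derive_value; [apply (is_derive_mult _ _ _ _ _ (is_derive_phi r x) Hg)|].
      + intros; apply Rmult_comm.
      + unfold dh, plus, mult. simpl. rewrite !pow_add. simpl. ring.
    - intros x _. apply (ex_derive_minus (K := R_AbsRing) (fun w => (1 - w ^ 2) ^ (r + 2 * m + 1)));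
      [auto_derive; easy|].
      apply ex_derive_scal, ex_derive_phi_moment_integrand.
    - rewrite !phi_0. simpl. ring. }
  assert (H : is_RInt dh 0 1
                (wallis (r + 2 * m + 1) - 2 * (2 * INR m + 1) * phi_moment r m)).
  { apply (is_RInt_minus (V := R_NormedModule)).
    - apply is_RInt_wallis.
    - apply is_RInt_scal_l, is_RInt_phi_moment. }
  apply (is_RInt_unique (V := R_CompleteNormedModule)) in H0, H.
  lra.
Qed.

Lemma lhs_term_eq r m :
  lhs_term r (S m) = 4 / 4 ^ r * central_binom_ratio m * phi_moment r m.
Proof.
  assert (HJ : phi_moment r m
               = / ((2 * INR (r + 2 * m + 1) + 1) * central_binom_ratio (r + 2 * m + 1))
                 / (2 * (2 * INR m + 1))).
  { rewrite <- wallis_eq, <- phi_moment_eq. pose proof (pos_INR m). field. lra. }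
  unfold lhs_term.
  replace (4 * S m + 2 * r - 2)%nat with (2 * (r + 2 * m + 1))%nat by lia.
  replace (2 * S m + r - 1)%nat with (r + 2 * m + 1)%nat by lia.
  rewrite HJ, !C_central_binom, central_binom_ratio_S.
  replace (r + 2 * m + 1)%nat with (r + m + m + 1)%nat by lia.
  rewrite !pow_add, !plus_INR, S_INR. simpl pow.
  pose proof (pos_INR m). pose proof (pos_INR r). pose proof (central_binom_ratio_pos m).
  pose proof (central_binom_ratio_pos (r + m + m + 1)).
  assert (0 < 4 ^ r) by (apply pow_lt; lra). assert (0 < 4 ^ m) by (apply pow_lt; lra).
  simpl INR. field. repeat split; lra.
Qed.

Lemma is_RInt_calB k :
  is_RInt (fun w => w * ((w ^ 2 / 2) ^ k / sqrt (1 - w ^ 2 / 2))) 0 1 (calB k).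
Proof.
  unfold calB.
  replace (1 / 2) with (1 ^ 2 / 2) by (simpl; field).
  replace 0 with (0 ^ 2 / 2) at 2 by (simpl; field).
  apply (is_RInt_comp (V := R_CompleteNormedModule)
           (fun t => t ^ k / sqrt (1 - t)) (fun w => w ^ 2 / 2) (fun w => w)).
  - intros x Hx. rewrite Rmin_left, Rmax_right in Hx by lra.
    apply (ex_derive_continuous (K := R_AbsRing) (V := R_NormedModule)).
    auto_derive. repeat split; [nra | apply Rgt_not_eq, sqrt_lt_R0; nra].
  - intros x _. split.
    + auto_derive; [easy | field].
    + apply (ex_derive_continuous (K := R_AbsRing) (V := R_NormedModule)). auto_derive. easy.
Qed.

Lemma pow4_split r k : (1 <= r)%nat -> (k <= r)%nat ->
  4 ^ r = 2 ^ (2 * r - k - 1) * 2 ^ k * 2.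
Proof.
  intros Hr Hk. replace 4 with (2 ^ 2) by ring.
  rewrite <- pow_mult, <- pow_add, Rmult_comm, tech_pow_Rmult.
  f_equal. lia.
Qed.

Lemma is_RInt_rhs_value r : (1 <= r)%nat ->
  is_RInt (fun w => 4 / 4 ^ r * phi r w / sqrt (2 - w ^ 2)) 0 1 (rhs_value r).
Proof.
  intro Hr. unfold rhs_value. rewrite scal_sum.
  apply is_RInt_ext with (fun w => sum_f_R0 (fun k =>
     (-1) ^ k / ((2 * INR k + 1) * 2 ^ (2 * r - k - 1)) * Binomial.C r k * sqrt 2
     * (w * ((w ^ 2 / 2) ^ k / sqrt (1 - w ^ 2 / 2)))) r).
  2: { apply is_RInt_sum_f_R0. intros k _.
       eapply is_RInt_value; [apply is_RInt_scal_l, is_RInt_calB | simpl; ring]. }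
  intros w Hw. rewrite Rmin_left, Rmax_right in Hw by lra.
  assert (Hs : 0 < sqrt (1 - w ^ 2 / 2)) by (apply sqrt_lt_R0; nra).
  assert (E2 : sqrt (2 - w ^ 2) = sqrt 2 * sqrt (1 - w ^ 2 / 2)).
  { rewrite <- sqrt_mult_alt by lra. f_equal. field. }
  assert (Hs2 : 0 < sqrt 2) by (apply sqrt_lt_R0; lra).
  assert (E22 : sqrt 2 * sqrt 2 = 2) by (apply sqrt_sqrt; lra).
  symmetry. rewrite E2. unfold phi.
  set (s := sqrt (1 - w ^ 2 / 2)) in *. set (s2 := sqrt 2) in *.
  match goal with |- 4 / 4 ^ r * ?S / ?D = _ =>
    replace (4 / 4 ^ r * S / D) with (4 / 4 ^ r / D * S)
      by (field; repeat split; try lra; apply pow_nonzero; lra)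
  end.
  rewrite scal_sum. apply sum_eq. intros k Hk.
  assert (Ew : (w ^ 2 / 2) ^ k = w ^ (2 * k) / 2 ^ k).
  { unfold Rdiv. rewrite Rpow_mult_distr, pow_inv, pow_mult. reflexivity. }
  rewrite (pow4_split r k Hr Hk), Ew, pow_add, pow_1.
  replace 4 with (2 * (s2 * s2)) by lra.
  pose proof (pos_INR k).
  field. repeat split; try lra; apply pow_nonzero; lra.
Qed.

Lemma sqrt_one_sub_sqr_one_sub_sqr w : 0 <= w ->
  sqrt (1 - (1 - w ^ 2) ^ 2) = w * sqrt (2 - w ^ 2).
Proof.
  intro Hw. rewrite <- (sqrt_pow2 w Hw) at 2. rewrite <- sqrt_mult_alt by nra.
  f_equal. ring.
Qed.

Lemma inv_sqrt_kernel_bounds N w : 0 < w <= 1 ->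
  0 <= / sqrt (2 - w ^ 2) - w * inv_sqrt_partial N ((1 - w ^ 2) ^ 2)
    <= central_binom_ratio (S N) / w.
Proof.
  intros Hw. set (y := (1 - w ^ 2) ^ 2).
  assert (Hz : 0 <= 1 - w ^ 2 < 1) by nra.
  assert (Hy : 0 <= y < 1) by (unfold y; split; [apply pow_le; lra | simpl; nra]).
  assert (Hq : 1 <= sqrt (2 - w ^ 2)) by (rewrite <- sqrt_1; apply sqrt_le_1_alt; nra).
  assert (Hyn : y ^ S N <= 1) by (rewrite <- (pow1 (S N)); apply pow_incr; lra).
  pose proof (pow_le y (S N) (proj1 Hy)). pose proof (central_binom_ratio_pos (S N)).
  pose proof (sqrt_mul_inv_sqrt_partial_le_1 N y Hy) as Hlo.
  pose proof (one_sub_sqrt_mul_inv_sqrt_partial_le N y Hy) as Hhi.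
  unfold y in Hlo, Hhi. rewrite sqrt_one_sub_sqr_one_sub_sqr in Hlo, Hhi by lra. fold y in Hlo, Hhi.
  set (q := sqrt (2 - w ^ 2)) in *. set (p := inv_sqrt_partial N y) in *.
  set (c := central_binom_ratio (S N)) in *.
  assert (E : / q - w * p = (1 - w * q * p) / q) by (field; lra).
  rewrite E. split; [apply Rdiv_le_0_compat; lra|].
  apply Rle_div_l; [lra|].
  apply Rle_trans with (c * y ^ S N / (w * q)); [lra|].
  apply Rle_div_l; [nra|].
  replace (c / w * q * (w * q)) with (c * (q * q)) by (field; lra).
  apply Rmult_le_compat_l; nra.
Qed.

Lemma phi_mul_inv_sqrt_kernel_bounds r N w : 0 <= w <= 1 ->
  0 <= phi r w * (/ sqrt (2 - w ^ 2) - w * inv_sqrt_partial N ((1 - w ^ 2) ^ 2))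
    <= central_binom_ratio (S N).
Proof.
  intros Hw. pose proof (central_binom_ratio_pos (S N)).
  destruct (Req_dec w 0) as [->|Hw0]; [rewrite phi_0; lra|].
  destruct (phi_bounds r w Hw) as [Hp0 Hp1].
  destruct (inv_sqrt_kernel_bounds N w ltac:(lra)) as [Hk0 Hk1].
  split; [now apply Rmult_le_pos|].
  replace (central_binom_ratio (S N)) with (w * (central_binom_ratio (S N) / w)) by (field; lra).
  now apply Rmult_le_compat.
Qed.

Lemma is_RInt_bounds (f : R -> R) a c l lo hi : a <= c -> is_RInt f a c l ->
  (forall x, a <= x <= c -> lo <= f x <= hi) -> (c - a) * lo <= l <= (c - a) * hi.
Proof.
  intros Hac Hf Hb. split.
  - apply (is_RInt_le (fun _ => lo) f a c); [lra | apply is_RInt_const_R | exact Hf |].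
    intros x Hx. apply Hb. lra.
  - apply (is_RInt_le f (fun _ => hi) a c); [lra | exact Hf | apply is_RInt_const_R |].
    intros x Hx. apply Hb. lra.
Qed.

Lemma is_RInt_partial_sum r N :
  is_RInt (fun w => 4 / 4 ^ r * (phi r w * (w * inv_sqrt_partial N ((1 - w ^ 2) ^ 2)))) 0 1
    (sum_f_R0 (fun m => lhs_term r (S m)) N).
Proof.
  apply is_RInt_ext with
    (fun w => sum_f_R0 (fun m => 4 / 4 ^ r * central_binom_ratio m
                                 * (phi r w * (w * (1 - w ^ 2) ^ (2 * m)))) N).
  - intros w _. unfold inv_sqrt_partial.
    transitivity (4 / 4 ^ r * phi r w * w
      * sum_f_R0 (fun m => central_binom_ratio m * ((1 - w ^ 2) ^ 2) ^ m) N);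
      [|now rewrite <- !Rmult_assoc].
    rewrite scal_sum.
    apply sum_eq. intros m _. rewrite pow_mult. ring.
  - apply is_RInt_sum_f_R0. intros m _. rewrite lhs_term_eq.
    apply is_RInt_scal_l, is_RInt_phi_moment.
Qed.

Lemma rhs_value_sub_partial_sum_bounds r N : (1 <= r)%nat ->
  0 <= rhs_value r - sum_f_R0 (fun m => lhs_term r (S m)) N
    <= 4 / 4 ^ r * central_binom_ratio (S N).
Proof.
  intro Hr.
  assert (H4 : 0 < 4 / 4 ^ r) by (apply Rdiv_lt_0_compat; [lra | apply pow_lt; lra]).
  assert (HD : is_RInt (fun w => 4 / 4 ^ r * (phi r w * (/ sqrt (2 - w ^ 2)
                 - w * inv_sqrt_partial N ((1 - w ^ 2) ^ 2)))) 0 1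
                 (rhs_value r - sum_f_R0 (fun m => lhs_term r (S m)) N)).
  { eapply is_RInt_ext;
      [|exact (is_RInt_minus (V := R_NormedModule) _ _ _ _ _ _
                 (is_RInt_rhs_value r Hr) (is_RInt_partial_sum r N))].
    intros w Hw. rewrite Rmin_left, Rmax_right in Hw by lra.
    unfold minus, plus, opp. simpl. field.
    split; [apply Rgt_not_eq, sqrt_lt_R0; nra | apply pow_nonzero; lra]. }
  replace 0 with ((1 - 0) * (4 / 4 ^ r * 0)) by ring.
  replace (4 / 4 ^ r * central_binom_ratio (S N))
    with ((1 - 0) * (4 / 4 ^ r * central_binom_ratio (S N))) by ring.
  apply (is_RInt_bounds _ _ _ _ _ _ Rle_0_1 HD).
  intros w Hw. pose proof (phi_mul_inv_sqrt_kernel_bounds r N w Hw).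
  split; apply Rmult_le_compat_l; lra.
Qed.

Theorem theorem3p0p4 (r : nat) (hr : (1 <= r)%nat) :
  is_series (fun m : nat => lhs_term r (S m)) (rhs_value r).
Proof.
  change (is_lim_seq (sum_n (fun m => lhs_term r (S m))) (rhs_value r)).
  apply is_lim_seq_le_le
    with (fun N => rhs_value r - 4 / 4 ^ r * central_binom_ratio (S N)) (fun _ => rhs_value r).
  - intro N. rewrite sum_n_Reals.
    pose proof (rhs_value_sub_partial_sum_bounds r N hr). lra.
  - replace (Finite (rhs_value r)) with (Finite (rhs_value r - 4 / 4 ^ r * 0)) by (f_equal; ring).
    apply (is_lim_seq_minus' (fun _ => rhs_value r)); [apply is_lim_seq_const|].
    apply (is_lim_seq_scal_l (fun N => central_binom_ratio (S N)) (4 / 4 ^ r) 0).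
    apply -> (is_lim_seq_incr_1 central_binom_ratio). apply is_lim_seq_central_binom_ratio.
  - apply is_lim_seq_const.
Qed.
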